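(* Let $n\ge1$ and $\mathbf{x}\in\{0,1\}^n$. Let $\omega=\omega(\mathbf{x}')$, let $m$ be the number of 1-runs in $\mathbf{x}'$ and $m_1$ the number of these of length $1$. For $j=0,1,2,3,4$ let $A_j$ be the number of $\mathbf{y}\in\Phi_2(\mathbf{x})$ with $\omega(\mathbf{y}')=\omega-j$. Then (a) $A_0+A_1=1+m+\binom{m}{2}$; (b) $A_2+A_3=(\omega-m)(m+1)-(m-m_1)$; (c) $A_4=\binom{\omega-m}{2}-(\omega-m)+(m-m_1)$.
   Context: A grain pattern of length $n$ is a subset $E\subseteq\{2,\dots,n\}$ containing no two consecutive integers. For such $E$, $\phi_E:\{0,1\}^n\to\{0,1\}^n$ sends $\mathbf{x}=(x_1,\dots,x_n)$ to $\mathbf{y}$ with $y_j=x_{j-1}$ if $j\in E$ and $y_j=x_j$ otherwise. $\Phi_t(\mathbf{x})=\{\phi_E(\mathbf{x}): E \text{ a grain pattern of length } n,\ |E|\le t\}$ (a set). The derivative sequence of $\mathbf{x}$ is $\mathbf{x}'=(x'_2,\dots,x'_n)$ with $x'_j=x_{j-1}\oplus x_j$ (mod 2); $\omega(\cdot)$ is Hamming weight; a 1-run of $\mathbf{x}'$ is a maximal block of consecutive 1s. Binomial coefficients $\binom{a}{b}$ are $0$ when $b>a\ge0$. *)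

(* Binary vectors of length n are n.-tuple bool; coordinate
   x_j (1-based, paper) is tnth x (j-1) (0-based here). *)
From mathcomp Require Import all_boot all_order all_algebra.
Set Implicit Arguments. Unset Strict Implicit. Unset Printing Implicit Defensive.

Definition grain_pattern (n : nat) (E : {set 'I_n}) : bool :=
  [forall i : 'I_n, (i \in E) ==>
     ((0 < i)%N && [forall j : 'I_n, (j \in E) ==> (nat_of_ord j != i.+1)])].

Definition phiE (n : nat) (E : {set 'I_n}) (x : n.-tuple bool) : n.-tuple bool :=
  [tuple (if i \in E then nth false x i.-1 else tnth x i) | i < n].

Definition Phi (n t : nat) (x : n.-tuple bool) : {set n.-tuple bool} :=
  [set y | [exists E : {set 'I_n},
              [&& grain_pattern E, (#|E| <= t)%N & y == phiE E x]]].

Definition deriv_seq (s : seq bool) : seq bool :=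
  [seq (nth false s i) (+) (nth false s i.+1) | i <- iota 0 (size s).-1].

Definition weight (s : seq bool) : nat := count id s.

(* Number of 1-runs (maximal blocks of consecutive 1s): count their starting
   positions, i.e. positions i with s_i = 1 and (i = 0 or s_{i-1} = 0). *)
Definition run_start (s : seq bool) (i : nat) : bool :=
  nth false s i && ((i == 0%N) || ~~ nth false s i.-1).
Definition run_end (s : seq bool) (i : nat) : bool :=
  nth false s i && ((i.+1 == size s) || ~~ nth false s i.+1).

Definition num_runs (s : seq bool) : nat :=
  count (run_start s) (iota 0 (size s)).

Definition num_runs1 (s : seq bool) : nat :=
  count (fun i => run_start s i && run_end s i) (iota 0 (size s)).

From mathcomp Require Import all_boot all_order all_algebra zify.
Set Implicit Arguments. Unset Strict Implicit. Unset Printing Implicit Defensive.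

(* Only shifts at switch positions i (those with x_(i-1) != x_i, i.e. with a 1
   of x' at i-1) change x, so Phi_2(x) is in bijection with the separated sets
   of at most two switches.  A shift at a switch i turns x'_(i-1) into 0 and
   flips x'_i, hence lowers the weight by 2 when x'_i = 1 (a switch continued
   by the next one), by 0 when x'_i = 0 (a switch ending a 1-run of x'), and
   by 1 at the last position.  Thus A_0 + A_1, A_2 + A_3 and A_4 count the
   patterns with 0, 1 and 2 continued switches.  A set of positions has
   1 + k + C(k,2) subsets of size at most 2, minus one non-separated pair for
   each element followed by another one; there are w - m continued switches,
   m run ends, and (w - m) - (m - m1) continued switches followed by a
   continued switch (windows 111 of x'). *)

Lemma count_add (T : eqType) (p q r : pred T) (s : seq T) :
  {in s, forall a, p a + q a = r a} -> count p s + count q s = count r s.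
Proof.
elim: s => //= a s IHs pqr.
rewrite addnACA IHs ?pqr ?mem_head // => b sb.
by rewrite pqr // mem_behead.
Qed.

Lemma count_iota_shift (f : pred nat) N :
  count (fun k => (0 < k) && f k.-1) (iota 0 N.+1) = count f (iota 0 N).
Proof. by rewrite /= -(addn0 1) iotaDl count_map; exact: eq_count. Qed.

Lemma count_iota_sum (p : pred nat) N : count p (iota 0 N) = \sum_(k < N) p k.
Proof.
elim: N => [|N IHN]; first by rewrite big_ord0.
by rewrite big_ord_recr -IHN -[in LHS]addn1 iotaD count_cat /= addn0.
Qed.

Lemma card_set_sum (T : finType) (S : {set T}) (p : pred T) :
  #|[set a in S | p a]| = \sum_(a in S) p a.
Proof.
rewrite -sum1_card big_mkcond [RHS]big_mkcond; apply: eq_bigr => a _.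
by rewrite inE; case: (a \in S); case: (p a).
Qed.

Lemma card_subsets_le (T : finType) (B : {set T}) k :
  #|[set A : {set T} | A \subset B & #|A| <= k]| = \sum_(i < k.+1) 'C(#|B|, i).
Proof.
elim: k => [|k IHk].
  by rewrite big_ord1 -cards_draws; apply: eq_card => A; rewrite !inE leqn0.
rewrite big_ord_recr /= -IHk -cards_draws -cardsUI.
rewrite (_ : _ :&: _ = set0) ?cards0 ?addn0; last first.
  by apply/setP => A; rewrite !inE; case: eqP => [->|]; rewrite ?ltnn ?andbF.
by apply: eq_card => A; rewrite !inE leq_eqVlt ltnS; case: (A \subset B); rewrite //= orbC.
Qed.

Lemma bin2D a b : 'C(a + b, 2) = 'C(a, 2) + a * b + 'C(b, 2).
Proof.
rewrite -binomial.Vandermonde !big_ord_recr big_ord0 /= !bin0 !bin1 subn0 mul1n muln1 add0n.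
by rewrite addnC [_ + a * b]addnC addnA.
Qed.

Section Windows.
Variable s : seq bool.
Local Notation bit k := (nth false s k).

(* Positions past the end of [s] read [false]. *)
Definition window_count (p : bool -> bool -> bool -> bool) : nat :=
  count (fun k => p (bit k) (bit k.+1) (bit k.+2)) (iota 0 (size s)).

Lemma window_countD (p q r : bool -> bool -> bool -> bool) :
  (forall a b c, p a b c + q a b c = r a b c) ->
  window_count p + window_count q = window_count r.
Proof. by move=> pqr; apply: count_add => k _. Qed.

Lemma window_count_shift (p : bool -> bool -> bool -> bool) :
  (forall a, p a false false = false) ->
  count (fun k => (0 < k) && p (bit k.-1) (bit k) (bit k.+1)) (iota 0 (size s)) =
  window_count p.
Proof.
move=> p_end; rewrite /window_count.
case: (size s) (@nth_default _ false s) => // N bit_end.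
pose f k := p (bit k) (bit k.+1) (bit k.+2).
rewrite (eq_count (a2 := fun k => (0 < k) && f k.-1)) => [|[|k] //].
rewrite count_iota_shift -(addn1 N) iotaD count_cat /= /f add0n.
by rewrite (bit_end N.+1) ?(bit_end N.+2) ?p_end ?addn0.
Qed.

Lemma weight_window : weight s = window_count (fun a _ _ => a).
Proof. by rewrite /weight -{1}(mkseq_nth false s) /mkseq count_map. Qed.

Lemma num_runs_window : num_runs s = window_count (fun a b _ => a && ~~ b).
Proof.
(* Every 1 of [s] either starts a run or follows another 1. *)
have runs_shift : num_runs s + window_count (fun a b _ => a && b) = weight s.
  rewrite weight_window -(window_count_shift (p := fun a b _ => a && b)); last exact: andbF.
  apply: count_add => -[|k] _ /=; first by rewrite /run_start andbT addn0.
  by rewrite /run_start /=; case: (nth _ s k); case: (nth _ s k.+1).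
apply/eqP; rewrite -(eqn_add2r (window_count (fun a b _ => a && b))) runs_shift.
rewrite weight_window -(@window_countD (fun a b _ => a && ~~ b) (fun a b _ => a && b)) //.
by case; case.
Qed.

Lemma num_runs1_window :
  num_runs1 s + window_count (fun a b c => [&& a, b & ~~ c]) = num_runs s.
Proof.
(* A run ends at a window 10 and has length 1 unless that window follows a 1. *)
rewrite num_runs_window -window_count_shift; last exact: andbF.
apply: count_add => k; rewrite mem_iota /run_start /run_end => /andP [_ ks].
have -> : (k.+1 == size s) || ~~ bit k.+1 = ~~ bit k.+1.
  by case: eqP => // ->; rewrite nth_default.
case: k {ks} => [|k] /=; first by case: (nth _ s 0); case: (nth _ s 1).
by case: (nth _ s k); case: (nth _ s k.+1); case: (nth _ s k.+2).
Qed.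

End Windows.

Section Separated.
Variable n : nat.
Implicit Types (A E F : {set 'I_n}) (i j : 'I_n).

Definition separated (E : {set 'I_n}) := [forall i in E, forall j in E, val j != i.+1].
Definition sep_subsets (A : {set 'I_n}) :=
  [set E : {set 'I_n} | [&& E \subset A, separated E & #|E| <= 2]].
Definition adjacent (A : {set 'I_n}) := [set i in A | [exists j in A, val j == i.+1]].

Lemma separatedP E :
  reflect (forall i j, i \in E -> j \in E -> val j != i.+1) (separated E).
Proof.
apply: (iffP forall_inP) => [sepE i j iE jE | sepE i iE].
  exact: (forall_inP (sepE i iE) j jE).
by apply/forall_inP => j; apply: sepE.
Qed.

Lemma separated_small E : #|E| <= 1 -> separated E.
Proof.
move=> /card_le1_eqP E1; apply/separatedP => i j iE jE.
by have /= -> := E1 _ _ iE jE; rewrite ltn_eqF.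
Qed.

Lemma sub_separated E F : E \subset F -> separated F -> separated E.
Proof.
move=> /subsetP sEF /separatedP sepF; apply/separatedP => i j iE jE.
exact: sepF (sEF i iE) (sEF j jE).
Qed.

Lemma adjacent_ordS A i : i \in adjacent A -> val (ordS i) = i.+1 /\ ordS i \in A.
Proof.
rewrite inE => /andP [_ /exists_inP [j jA /eqP ji]].
have ordSi : val (ordS i) = i.+1 by rewrite /= modn_small // -ji ltn_ord.
by have -> : ordS i = j by apply: val_inj; rewrite ordSi ji.
Qed.

Lemma card_sep_pairs A :
  #|[set E in sep_subsets A | #|E| == 2]| + #|adjacent A| = 'C(#|A|, 2).
Proof.
rewrite -cards_draws -[RHS](cardsID [set E | separated E]); congr (_ + _).
  apply: eq_card => E; rewrite !inE.
  by case: (E \subset A); case: (separated E); case: eqP => [->|]; rewrite ?andbF.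
pose pair i := [set i; ordS i].
have pair2 i : i \in adjacent A -> #|pair i| = 2.
  by case/adjacent_ordS => ordSi _; rewrite cards2 -val_eqE ordSi ltn_eqF.
have pair_inj : {in adjacent A &, injective pair}.
  move=> i i' /adjacent_ordS [ordSi _] /adjacent_ordS [ordSi' _] pii'.
  have /set2P[// | /(congr1 val)] : i \in pair i' by rewrite -pii' set21.
  have /set2P[-> // | /(congr1 val)] : i' \in pair i by rewrite pii' set21.
  by rewrite ordSi ordSi' /= => ? ?; exfalso; lia.
rewrite -(card_in_imset pair_inj); apply: eq_card => E; rewrite !inE.
apply/imsetP/idP => [[i adj_i ->] | /and3P [nsepE sEA /eqP E2]].
  have [ordSi ordSiA] := adjacent_ordS adj_i.
  rewrite pair2 // eqxx andbT subUset !sub1set ordSiA andbT.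
  have /setIdP [iA _] := adj_i; rewrite iA andbT.
  by apply/separatedP => /(_ i (ordS i)); rewrite set21 set22 ordSi eqxx => /(_ isT isT).
move: nsepE; rewrite negb_forall_in => /exists_inP [i iE].
rewrite negb_forall_in => /exists_inP [j jE /negbNE /eqP ji].
have adj_i : i \in adjacent A.
  by rewrite inE (subsetP sEA) //; apply/exists_inP; exists j; rewrite ?(subsetP sEA) ?ji.
have [ordSi _] := adjacent_ordS adj_i.
exists i => //; apply/eqP; rewrite eq_sym eqEcard pair2 // E2 leqnn andbT.
by rewrite subUset !sub1set iE (_ : ordS i = j) //; apply: val_inj; rewrite ordSi ji.
Qed.

Lemma card_sep_subsets A :
  #|sep_subsets A| + #|adjacent A| = 1 + #|A| + 'C(#|A|, 2).
Proof.
rewrite -(cardsID [set E : {set 'I_n} | #|E| <= 1]) -addnA -card_sep_pairs.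
congr (_ + (_ + _)).
  rewrite -[RHS](_ : \sum_(i < 2) 'C(#|A|, i) = _); last first.
    by rewrite big_ord_recr big_ord1 bin0 bin1.
  rewrite -card_subsets_le; apply: eq_card => E; rewrite !inE.
  case: (leqP #|E| 1) => E1; rewrite ?andbF // !andbT (separated_small E1).
  by rewrite (leq_trans E1) ?andbT.
apply: eq_card => E; rewrite !inE -ltnNge andbC -!andbA eqn_leq.
by case: (#|E| <= 2).
Qed.

End Separated.

Lemma size_deriv_seq (s : seq bool) : size (deriv_seq s) = (size s).-1.
Proof. by rewrite size_map size_iota. Qed.

Lemma nth_deriv_seq (s : seq bool) k :
  nth false (deriv_seq s) k = (k.+1 < size s) && (nth false s k (+) nth false s k.+1).
Proof.
rewrite -ltn_predRL; case: ltnP => [lt_k | le_k].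
  by rewrite (nth_map 0) ?size_iota ?nth_iota.
by rewrite nth_default // size_deriv_seq.
Qed.

Lemma card_ord_shift n (A : {set 'I_n.+1}) (f : pred nat) :
  (forall i : 'I_n.+1, (i \in A) = (0 < i) && f i.-1) -> #|A| = count f (iota 0 n).
Proof.
move=> memA; rewrite -count_iota_shift -val_enum_ord count_map cardE size_filter enumT.
by apply: eq_count => i; rewrite /= -memA.
Qed.

Section Switches.
Variables (n : nat) (x : n.+1.-tuple bool).
Local Notation d k := (nth false (deriv_seq x) k).

Definition switches := [set i : 'I_n.+1 | (0 < i) && d i.-1].
Definition cont_switches := [set i in switches | d i].
Definition end_switches := [set i in switches | ~~ d i].

Lemma in_switches i : (i \in switches) = (0 < i) && (nth false x i.-1 != tnth x i).
Proof.
rewrite inE nth_deriv_seq size_tuple (tnth_nth false) negb_eqb.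
by case: i => -[|i] //= lt_i; rewrite lt_i.
Qed.

Lemma card_switches : #|switches| = weight (deriv_seq x).
Proof.
rewrite weight_window /window_count size_deriv_seq size_tuple.
by apply: card_ord_shift => i; rewrite inE.
Qed.

Lemma card_cont_switches :
  #|cont_switches| = window_count (deriv_seq x) (fun a b _ => a && b).
Proof.
rewrite /window_count size_deriv_seq size_tuple.
by apply: card_ord_shift => -[[|i] lt_i]; rewrite !inE.
Qed.

Lemma card_end_switches : #|end_switches| = num_runs (deriv_seq x).
Proof.
rewrite num_runs_window /window_count size_deriv_seq size_tuple.
by apply: card_ord_shift => -[[|i] lt_i]; rewrite !inE.
Qed.

Lemma ord_max_cont_switches : ord_max \notin cont_switches.
Proof. by rewrite inE nth_deriv_seq size_tuple ltnn andbF. Qed.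

Lemma cont_switches_sub : cont_switches \subset switches.
Proof. by apply/subsetP => i; rewrite inE => /andP []. Qed.

Lemma end_switchesE : end_switches = switches :\: cont_switches.
Proof.
by apply/setP => i; rewrite !inE; case: (0 < i); case: (nth _ _ i.-1); case: (nth _ _ i).
Qed.

Lemma succ_switchP (i : 'I_n.+1) :
  reflect (exists2 j, j \in switches & val j = i.+1) (d i).
Proof.
apply: (iffP idP) => [di | [j]]; last by rewrite inE => /andP [_ dj] ji; rewrite ji in dj.
have lt_i1 : i.+1 < n.+1 by move: di; rewrite nth_deriv_seq size_tuple => /andP [].
by exists (Ordinal lt_i1); rewrite // inE /= di.
Qed.

Lemma exists_succ_cont_switch (i : 'I_n.+1) :
  [exists j in cont_switches, val j == i.+1] = d i && d i.+1.
Proof.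
apply/exists_inP/andP => [[j] | [di di1]].
  by rewrite !inE => /andP [/andP [_ +] +] /eqP ji; rewrite ji.
have /succ_switchP [j jS ji] := di.
have ji' : nat_of_ord j = i.+1 := ji.
by exists j; [rewrite inE jS ji' | apply/eqP].
Qed.

Lemma adjacent_switches : adjacent switches = cont_switches.
Proof.
apply/setP => i; rewrite [in LHS]inE [in RHS]inE; congr (_ && _).
by apply/exists_inP/succ_switchP => -[j jS /eqP ji]; exists j.
Qed.

Lemma adjacent_end_switches : adjacent end_switches = set0.
Proof.
apply/setP => i; rewrite !inE; apply/negbTE; apply/negP.
case/andP => /andP [_ /negP ndi] /exists_inP [j]; rewrite inE => /andP [jS _] /eqP ji.
by apply: ndi; apply/succ_switchP; exists j.
Qed.

Lemma card_adjacent_cont_switches :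
  #|adjacent cont_switches| = window_count (deriv_seq x) (fun a b c => [&& a, b & c]).
Proof.
rewrite /window_count size_deriv_seq size_tuple; apply: card_ord_shift => i.
rewrite inE exists_succ_cont_switch !inE -!andbA.
by case: i => -[|i] //= _; case: (nth _ _ i.+1); rewrite ?andbF.
Qed.

Lemma card_switches_split : #|switches| = #|cont_switches| + #|end_switches|.
Proof.
rewrite card_switches weight_window card_cont_switches card_end_switches num_runs_window.
by apply/esym/window_countD => -[] [].
Qed.

Lemma card_cont_switches_split :
  #|cont_switches| =
  #|adjacent cont_switches| + window_count (deriv_seq x) (fun a b c => [&& a, b & ~~ c]).
Proof.
rewrite card_cont_switches card_adjacent_cont_switches.
by apply/esym/window_countD => -[] [] [].
Qed.

End Switches.

Lemma grain_patternE n (E : {set 'I_n}) :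
  grain_pattern E = [forall i in E, 0 < i] && separated E.
Proof.
apply/forallP/andP => [grainE | [/forall_inP posE /separatedP sepE] i].
  split; first by apply/forall_inP => i iE; have /implyP/(_ iE)/andP[] := grainE i.
  apply/separatedP => i j iE jE.
  by have /implyP/(_ iE)/andP[_ /forallP/(_ j)/implyP] := grainE i; apply.
apply/implyP => iE; rewrite posE //=.
by apply/forallP => j; apply/implyP; apply: sepE.
Qed.

Section Phi2.
Variables (n : nat) (x : n.+1.-tuple bool).
Implicit Types E F : {set 'I_n.+1}.

Lemma grain_pattern_switches E : E \subset switches x -> grain_pattern E = separated E.
Proof.
move=> /subsetP sEP; rewrite grain_patternE (_ : [forall i in E, 0 < i]) //.
by apply/forall_inP => i /sEP; rewrite in_switches => /andP [].
Qed.

Lemma phiE_switches E : phiE (E :&: switches x) x = phiE E x.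
Proof.
apply: eq_from_tnth => i; rewrite !tnth_mktuple inE in_switches.
case: (i \in E) => //=; case: ifP => // /negbT.
rewrite negb_and -leqNgt leqn0 negbK (tnth_nth false).
by case/orP => /eqP // ->.
Qed.

Lemma phiE_inj :
  {in [pred E : {set 'I_n.+1} | E \subset switches x] &, injective (fun E => phiE E x)}.
Proof.
move=> E F /subsetP sEP /subsetP sFP phiEF; apply/setP => i.
have := congr1 (fun t => tnth t i) phiEF; rewrite !tnth_mktuple.
case: (boolP (i \in E)) => iE; case: (boolP (i \in F)) => iF //.
  by have := sEP i iE; rewrite in_switches => /andP [_ /eqP].
by have := sFP i iF; rewrite in_switches => /andP [_ /eqP] neq /esym.
Qed.

Lemma Phi2_image : Phi 2 x = (fun E => phiE E x) @: sep_subsets (switches x).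
Proof.
apply/setP => y; rewrite inE; apply/existsP/imsetP.
  case=> E /and3P [grainE cardE /eqP ->]; exists (E :&: switches x); last first.
    by rewrite phiE_switches.
  rewrite inE subsetIr -grain_pattern_switches ?subsetIr //=.
  rewrite !grain_patternE in grainE *; move: grainE => /andP [posE sepE].
  rewrite (sub_separated (subsetIl _ _) sepE) andbT; apply/andP; split.
    by apply/forall_inP => i /setIP [iE _]; exact: (forall_inP posE).
  exact: leq_trans (subset_leq_card (subsetIl _ _)) cardE.
case=> E; rewrite inE => /and3P [sEP sepE cardE] ->; exists E.
by rewrite grain_pattern_switches // sepE cardE eqxx.
Qed.

End Phi2.

Section ShiftWeight.
Variables (n : nat) (x : n.+1.-tuple bool) (E : {set 'I_n.+1}).
Hypotheses (sepE : separated E) (sEP : E \subset switches x).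
Local Notation d s k := (nth false (deriv_seq s) k).
Let e k := (inord k : 'I_n.+1) \in E.

Let e_switch k : k <= n -> e k -> 0 < k /\ d x k.-1.
Proof.
move=> le_kn /(subsetP sEP); rewrite inE inordK //.
by case/andP.
Qed.

Let e_sep k : k < n -> e k -> e k.+1 = false.
Proof.
move=> lt_kn ek; apply/negbTE/negP => ek1.
have lt_k : k < n.+1 := ltnW lt_kn.
by have /eqP[] := separatedP _ sepE _ _ ek ek1; rewrite /= !inordK.
Qed.

Let nth_phiE k :
  k <= n -> nth false (phiE E x) k = if e k then nth false x k.-1 else nth false x k.
Proof.
move=> le_kn; have ik : val (inord k : 'I_n.+1) = k := inordK le_kn.
by rewrite -[in LHS]ik -tnth_nth tnth_mktuple (tnth_nth false) ik.
Qed.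

Let deriv_phiE k :
  k < n -> d (phiE E x) k + e k.+1 + 2 * (e k && d x k) = d x k + e k.
Proof.
move=> lt_kn; rewrite !nth_deriv_seq !size_tuple ltnS lt_kn.
rewrite (nth_phiE (ltnW lt_kn)) (nth_phiE lt_kn) /=.
case ek1: (e k.+1); case ek: (e k) => //=.
- by rewrite e_sep in ek1.
- have [_] := e_switch lt_kn ek1; rewrite nth_deriv_seq size_tuple ltnS lt_kn /=.
  by case: (nth _ x k); case: (nth _ x k.+1).
- have [] := e_switch (ltnW lt_kn) ek; case: k {ek ek1} lt_kn => // k lt_kn _.
  rewrite /= nth_deriv_seq size_tuple ltnS (ltnW lt_kn) /=.
  by case: (nth _ x k); case: (nth _ x k.+1); case: (nth _ x k.+2).
- by rewrite !addn0.
Qed.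

Lemma weight_phiE :
  weight (deriv_seq (phiE E x)) + 2 * #|E :&: cont_switches x| + (ord_max \in E) =
  weight (deriv_seq x).
Proof.
have sum_deriv_phiE : \sum_(k < n) d (phiE E x) k + \sum_(k < n) e k.+1 +
    2 * \sum_(k < n) (e k && d x k) = \sum_(k < n) d x k + \sum_(k < n) e k.
  by rewrite big_distrr -!big_split; apply: eq_bigr => k _; exact: deriv_phiE.
have cardE : #|E| = \sum_(k < n.+1) e k.
  rewrite -sum1_card big_mkcond; apply: eq_bigr => i _.
  by rewrite /e inord_val; case: (i \in E).
have e0 : e 0 = false by apply/negbTE/negP => /(e_switch (leq0n _)) [].
have eI (i : 'I_n) : e i = (widen_ord (leqnSn n) i \in E).
  rewrite /e (_ : inord i = widen_ord _ i) //.
  by apply: val_inj; rewrite /= inordK // ltnS ltnW.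
have card_cont : #|E :&: cont_switches x| = \sum_(k < n) (e k && d x k).
  rewrite -sum1_card big_mkcond big_ord_recr /= in_setI (negbTE (ord_max_cont_switches x)).
  rewrite andbF addn0.
  apply: eq_bigr => i _; rewrite !inE eI; case: (boolP (_ \in E)) => //= /(subsetP sEP).
  by rewrite inE => ->.
have e_max : e n = (ord_max \in E).
  by rewrite /e (_ : inord n = ord_max) //; apply: val_inj; rewrite /= inordK.
have card_succ : #|E| = \sum_(k < n) e k.+1.
  by rewrite cardE big_ord_recl e0; exact: eq_bigr.
have card_pred : #|E| = \sum_(k < n) e k + (ord_max \in E).
  by rewrite cardE big_ord_recr e_max.
move: sum_deriv_phiE card_succ card_pred.
rewrite !weight_window /window_count !size_deriv_seq !size_tuple /= !count_iota_sum card_cont.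
set a := \sum_(k < n) d (phiE E x) k; set b := \sum_(k < n) d x k.
set c := \sum_(k < n) (e k && d x k).
set s0 := \sum_(k < n) e k; set s1 := \sum_(k < n) e k.+1.
lia.
Qed.

End ShiftWeight.

Section WeightDrop.
Variables (n : nat) (x : n.+1.-tuple bool).

Definition weight_drop (E : {set 'I_n.+1}) : nat :=
  2 * #|E :&: cont_switches x| + (ord_max \in E).

Lemma weight_drop_phiE (E : {set 'I_n.+1}) : E \in sep_subsets (switches x) ->
  weight (deriv_seq (phiE E x)) + weight_drop E = weight (deriv_seq x).
Proof. by rewrite inE addnA => /and3P [sEP sepE _]; exact: weight_phiE. Qed.

Lemma card_Phi2_weight j :
  #|[set y in Phi 2 x |
      ((weight (deriv_seq y))%:Z == (weight (deriv_seq x))%:Z - j%:Z)%R]| =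
  #|[set E in sep_subsets (switches x) | weight_drop E == j]|.
Proof.
have dropE (E : {set 'I_n.+1}) : E \in sep_subsets (switches x) ->
    ((weight (deriv_seq (phiE E x)))%:Z == (weight (deriv_seq x))%:Z - j%:Z)%R =
    (weight_drop E == j).
  move=> SE; rewrite eq_sym GRing.subr_eq -PoszD eqz_nat -(weight_drop_phiE SE).
  by rewrite eqn_add2l.
rewrite Phi2_image -(card_in_imset (f := fun E => phiE E x)); last first.
  move=> E F; rewrite !inE => /andP [/and3P [sEP _ _] _] /andP [/and3P [sFP _ _] _].
  exact: phiE_inj.
apply: eq_card => y; rewrite inE.
apply/andP/imsetP => [[/imsetP [E SE ->]] | [E /setIdP [SE dE] ->]].
  by rewrite dropE // => dE; exists E; rewrite // inE SE.
by rewrite dropE // dE; split; first exact: imset_f.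
Qed.

Lemma cardI_cont_switches_max (E : {set 'I_n.+1}) :
  #|E :&: cont_switches x| + (ord_max \in E) <= #|E|.
Proof.
rewrite -[leqRHS](cardsID (cont_switches x) E) leq_add2l.
case: (boolP (ord_max \in E)) => //= maxE.
by apply/card_gt0P; exists ord_max; rewrite inE maxE ord_max_cont_switches.
Qed.

Lemma weight_drop_le4 (E : {set 'I_n.+1}) : #|E| <= 2 -> weight_drop E <= 4.
Proof.
have := cardI_cont_switches_max E; rewrite /weight_drop.
set k := #|_ :&: _|; set b := (ord_max \in E); lia.
Qed.

Lemma weight_drop_le1 (E : {set 'I_n.+1}) : E \subset switches x ->
  (weight_drop E <= 1) = (E \subset end_switches x).
Proof.
move=> sEP; rewrite end_switchesE subsetD sEP -setI_eq0 -cards_eq0 /weight_drop /=.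
by set k := #|_ :&: _|; set b := (ord_max \in E); case: b; lia.
Qed.

Lemma weight_drop_eq4 (E : {set 'I_n.+1}) : #|E| <= 2 ->
  (weight_drop E == 4) = (E \subset cont_switches x) && (#|E| == 2).
Proof.
have subCE : (E \subset cont_switches x) = (#|E :&: cont_switches x| == #|E|).
  by rewrite (subset_leqif_cards (subsetIl E _)).2; apply/setIidPl/eqP.
move: (cardI_cont_switches_max E); rewrite subCE /weight_drop.
set k := #|_ :&: _|; set b := (ord_max \in E); set m := #|E|.
by case: b; lia.
Qed.

Lemma card_weight_drop_le1 :
  #|[set E in sep_subsets (switches x) | weight_drop E <= 1]| =
  1 + #|end_switches x| + 'C(#|end_switches x|, 2).
Proof.
rewrite -card_sep_subsets adjacent_end_switches cards0 addn0.
apply: eq_card => E; rewrite !inE.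
case sEP: (E \subset switches x); last by rewrite end_switchesE subsetD sEP.
by rewrite weight_drop_le1 // andbC.
Qed.

Lemma card_weight_drop_eq4 :
  #|[set E in sep_subsets (switches x) | weight_drop E == 4]| +
  #|adjacent (cont_switches x)| = 'C(#|cont_switches x|, 2).
Proof.
rewrite -card_sep_pairs; congr (_ + _); apply: eq_card => E; rewrite !inE.
case E2: (#|E| <= 2); rewrite ?andbF // weight_drop_eq4 //.
case sEC: (E \subset cont_switches x); rewrite ?andbF //=.
by rewrite (subset_trans sEC (cont_switches_sub x)).
Qed.

Lemma card_weight_drop01 :
  #|[set E in sep_subsets (switches x) | weight_drop E == 0]| +
  #|[set E in sep_subsets (switches x) | weight_drop E == 1]| =
  #|[set E in sep_subsets (switches x) | weight_drop E <= 1]|.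
Proof.
by rewrite !card_set_sum -big_split; apply: eq_bigr => E _; case: weight_drop => [|[|]].
Qed.

Lemma card_weight_drop_partition :
  #|[set E in sep_subsets (switches x) | weight_drop E <= 1]| +
  (#|[set E in sep_subsets (switches x) | weight_drop E == 2]| +
   #|[set E in sep_subsets (switches x) | weight_drop E == 3]|) +
  #|[set E in sep_subsets (switches x) | weight_drop E == 4]| =
  #|sep_subsets (switches x)|.
Proof.
rewrite !card_set_sum -[RHS]sum1_card -!big_split; apply: eq_bigr => E.
by rewrite inE => /and3P [_ _ /weight_drop_le4]; case: weight_drop => [|[|[|[|[|]]]]].
Qed.

End WeightDrop.

Import GRing.Theory Num.Theory.
Local Open Scope ring_scope.

Theorem lemma4p3 (n : nat) (x : n.-tuple bool) :
  (1 <= n)%N ->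
  let w := weight (deriv_seq x) in
  let m := num_runs (deriv_seq x) in
  let m1 := num_runs1 (deriv_seq x) in
  let A := fun j : nat =>
    #|[set y in Phi 2 x | (weight (deriv_seq y))%:Z == w%:Z - j%:Z]| in
  [/\ ((A 0%N + A 1%N)%:Z = 1 + m%:Z + ('C(m, 2))%:Z),
      ((A 2%N + A 3%N)%:Z = (w%:Z - m%:Z) * (m%:Z + 1) - (m%:Z - m1%:Z))
    & ((A 4%N)%:Z = ('C(w - m, 2))%:Z - (w%:Z - m%:Z) + (m%:Z - m1%:Z))].
Proof.
case: n x => [|n] x // _ w m m1 A.
have AD j : A j = #|[set E in sep_subsets (switches x) | weight_drop x E == j]|.
  exact: card_Phi2_weight.
have D01 := card_weight_drop01 x; have Dall := card_weight_drop_partition x.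
have LZ := card_weight_drop_le1 x; have D4C := card_weight_drop_eq4 x.
have SP := card_sep_subsets (switches x); rewrite adjacent_switches in SP.
have PCZ := card_switches_split x; have Cr := card_cont_switches_split x.
have wCZ : w = (#|cont_switches x| + #|end_switches x|)%N by rewrite -PCZ card_switches.
have mZ : m = #|end_switches x| by rewrite card_end_switches.
have m1r := num_runs1_window (deriv_seq x); rewrite -/m1 -/m mZ in m1r.
have binCZ := bin2D #|cont_switches x| #|end_switches x|.
rewrite !AD wCZ mZ addnK; rewrite PCZ in SP; clearbody w m m1.
(* [set] unifies the syntactically different elaborations of these cardinals,
   which [nia] would otherwise treat as distinct atoms. *)
move: D01 Dall LZ D4C SP Cr m1r binCZ.
set c := #|cont_switches x|; set z := #|end_switches x| => *.
by split; nia.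
Qed.
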